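(* Let $v_1,\dots,v_m$ be distinct values and $S_1,\dots,S_n$ set variables. Enforcing BC on $\mathrm{Precedence}([v_1,\dots,v_m],[S_1,\dots,S_n])$ is strictly stronger than enforcing BC on each of the constraints $\mathrm{Precedence}([v_i,v_j],[S_1,\dots,S_n])$ for $1\le i<j\le m$. That is: (i) for all bounds, if $\mathrm{Precedence}([v_1,\dots,v_m],[S_1,\dots,S_n])$ is BC then every $\mathrm{Precedence}([v_i,v_j],[S_1,\dots,S_n])$ with $i<j$ is BC; and (ii) there exist bounds for which every $\mathrm{Precedence}([v_i,v_j],[S_1,\dots,S_n])$ with $1\le i<j\le m$ is BC but $\mathrm{Precedence}([v_1,\dots,v_m],[S_1,\dots,S_n])$ is not BC.
   Context: A set variable $S$ has a lower bound $lb(S)$ and an upper bound $ub(S)$ (finite sets of integers with $lb(S)\subseteq ub(S)$); its possible values are the sets $T$ with $lb(S)\subseteq T\subseteq ub(S)$. A bound support of a constraint is an assignment to each set variable of a set between its bounds that satisfies the constraint. A constraint is bound consistent (BC) iff for each set variable $S$, every value in $ub(S)$ belongs to $S$ in at least one bound support and every value in $lb(S)$ belongs to $S$ in all bound supports. For set variables and distinct values $a,b$, $\mathrm{Precedence}([a,b],[S_1,\dots,S_n])$ holds iff $\min\{i \mid (a\in S_i \wedge b\notin S_i)\text{ or } i=n+1\} < \min\{i \mid (b\in S_i\wedge a\notin S_i) \text{ or } i=n+2\}$. $\mathrm{Precedence}([v_1,\dots,v_m],[S_1,\dots,S_n])$ holds iff $\mathrm{Precedence}([v_j,v_k],[S_1,\dots,S_n])$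 holds for all $1\le j<k\le m$. *)

From mathcomp Require Import all_boot all_order all_algebra.
Set Implicit Arguments. Unset Strict Implicit. Unset Printing Implicit Defensive.

(* Values are integers; a (finite) set of integers is represented by a
   sequence [seq int] read extensionally via membership [\in].
   An assignment to the set variables S_1..S_n is a list of n such sets. *)

Definition subset_int (A B : seq int) : Prop := {subset A <= B}.

Definition constraint := seq (seq int) -> Prop.

Definition wf_bounds (lb ub : seq (seq int)) : Prop :=
  size lb = size ub /\
  forall i, i < size ub -> subset_int (nth [::] lb i) (nth [::] ub i).

Definition within_bounds (lb ub X : seq (seq int)) : Prop :=
  size X = size ub /\
  forall i, i < size ub ->
    subset_int (nth [::] lb i) (nth [::] X i) /\
    subset_int (nth [::] X i) (nth [::] ub i).

Definition bound_support (C : constraint) (lb ub X : seq (seq int)) : Prop :=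
  within_bounds lb ub X /\ C X.

Definition BC (C : constraint) (lb ub : seq (seq int)) : Prop :=
  forall i, i < size ub ->
    (forall v, v \in nth [::] ub i ->
       exists X, bound_support C lb ub X /\ v \in nth [::] X i) /\
    (forall v, v \in nth [::] lb i ->
       forall X, bound_support C lb ub X -> v \in nth [::] X i).

(* Precedence([a,b],[S_1..S_n]):
   min{i | (a ∈ S_i ∧ b ∉ S_i) or i = n+1}
     < min{i | (b ∈ S_i ∧ a ∉ S_i) or i = n+2}   (1-based indices). *)
Definition first_a (a b : int) (S : seq (seq int)) : nat :=
  (find (fun s => (a \in s) && (b \notin s)) S).+1.

Definition first_b (a b : int) (S : seq (seq int)) : nat :=
  if has (fun s => (b \in s) && (a \notin s)) S
  then (find (fun s => (b \in s) && (a \notin s)) S).+1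
  else (size S).+2.

Definition Precedence2 (a b : int) (S : seq (seq int)) : Prop :=
  first_a a b S < first_b a b S.

(* Precedence([v_1..v_m],[S_1..S_n]) : all pairs j < k (0-based here). *)
Definition Precedence (vs : seq int) (S : seq (seq int)) : Prop :=
  forall j k, j < k -> k < size vs -> Precedence2 (nth (0 : int) vs j) (nth (0 : int) vs k) S.

From mathcomp Require Import all_boot all_order all_algebra.

(* The lower-bound half of BC holds for every constraint,
   because every bound support contains the lower bounds.  Hence BC is
   monotone in the constraint: if C implies D, every bound support of C is
   one of D, so BC C implies BC D.

   Take vs = [1;2;3], S_1 in [{1,3},{1,2,3}] and S_2 in
   [{},{2}].  But 2 in S_2 has no
   support for the global constraint: if 2 is in S_1 then 2 is seen before 1
   (in S_2), and otherwise 3 is seen before 2 (in S_1). *)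

Lemma lb_in_support (C : constraint) (lb ub X : seq (seq int)) i v :
  i < size ub -> v \in nth [::] lb i ->
  bound_support C lb ub X -> v \in nth [::] X i.
Proof. by move=> lt_i_ub lb_v [[_ /(_ i lt_i_ub) [lb_sub_X _]] _]; apply: lb_sub_X. Qed.

Lemma BC_of_supports (C : constraint) (lb ub : seq (seq int)) :
  (forall i v, i < size ub -> v \in nth [::] ub i ->
     exists X, bound_support C lb ub X /\ v \in nth [::] X i) ->
  BC C lb ub.
Proof.
move=> supported i lt_i_ub; split=> [v|]; first exact: supported.
by move=> v lb_v X; apply: lb_in_support.
Qed.

(* BC is monotone: a weaker constraint has more bound supports. *)
Lemma BC_weaken (C D : constraint) (lb ub : seq (seq int)) :
  (forall X, C X -> D X) -> BC C lb ub -> BC D lb ub.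
Proof.
move=> CD bcC; apply: BC_of_supports => i v lt_i_ub ub_v.
have [X [[inX CX] v_X]] := proj1 (bcC i lt_i_ub) v ub_v.
by exists X; split=> //; split=> //; apply: CD.
Qed.

Definition within_boundsb (lb ub X : seq (seq int)) : bool :=
  (size X == size ub) &&
  all (fun i => all (mem (nth [::] X i)) (nth [::] lb i) &&
                all (mem (nth [::] ub i)) (nth [::] X i))
      (iota 0 (size ub)).

Lemma within_boundsbP (lb ub X : seq (seq int)) :
  within_boundsb lb ub X -> within_bounds lb ub X.
Proof.
case/andP=> /eqP size_X /allP inX; split=> // i lt_i_ub.
have /inX /andP[/allP lb_sub /allP ub_sup] : i \in iota 0 (size ub).
  by rewrite mem_iota.
by split=> v; [move/lb_sub | move/ub_sup].
Qed.

Lemma wf_bounds_of_within (lb ub : seq (seq int)) :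
  within_bounds lb ub lb -> wf_bounds lb ub.
Proof. by case=> size_lb inlb; split=> // i /inlb []. Qed.

Definition covered_byb (c : pred (seq (seq int))) (ub : seq (seq int))
    (Ws : seq (seq (seq int))) : bool :=
  all (fun i => all (fun v => has (fun X => c X && (v \in nth [::] X i)) Ws)
                    (nth [::] ub i))
      (iota 0 (size ub)).

Lemma BC_of_witnesses (C : constraint) (c : pred (seq (seq int)))
    (lb ub : seq (seq int)) (Ws : seq (seq (seq int))) :
  (forall X, c X -> C X) ->
  all (within_boundsb lb ub) Ws -> covered_byb c ub Ws -> BC C lb ub.
Proof.
move=> cC /allP Ws_in /allP covered; apply: BC_of_supports => i v lt_i_ub ub_v.
have /covered /allP /(_ v ub_v) /hasP [X W_X /andP [cX v_X]] :
  i \in iota 0 (size ub) by rewrite mem_iota.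
by exists X; split=> //; split; [apply/within_boundsbP/Ws_in | apply: cC].
Qed.

Definition ex_vals : seq int := [:: Posz 1; Posz 2; Posz 3].
Definition ex_lb : seq (seq int) := [:: [:: Posz 1; Posz 3]; [::]].
Definition ex_ub : seq (seq int) := [:: [:: Posz 1; Posz 2; Posz 3]; [:: Posz 2]].

(* Supports for the pairwise constraints: the first satisfies all of them
   with S_2 empty; the other two put 2 in S_2, suitable for the pair (1,2)
   and for the pairs (1,3), (2,3) respectively. *)
Definition ex_supports : seq (seq (seq int)) :=
  [:: [:: [:: Posz 1; Posz 2; Posz 3]; [::]];
      [:: [:: Posz 1; Posz 3]; [:: Posz 2]];
      [:: [:: Posz 1; Posz 2; Posz 3]; [:: Posz 2]]].

Definition precedence2b (a b : int) : pred (seq (seq int)) :=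
  fun S => first_a a b S < first_b a b S.

Lemma ex_pairwise_BC i j : i < j -> j < size ex_vals ->
  BC (Precedence2 (nth (0 : int) ex_vals i) (nth (0 : int) ex_vals j)) ex_lb ex_ub.
Proof.
move=> lt_ij lt_j; apply: (@BC_of_witnesses _
  (precedence2b (nth (0 : int) ex_vals i) (nth (0 : int) ex_vals j)) _ _ ex_supports).
- by move=> X.
- by vm_compute.
- by case: i j lt_ij lt_j => [|[|[|i]]] [|[|[|[|j]]]] //; vm_compute.
Qed.

Lemma ex_no_support_2_in_S2 X :
  within_bounds ex_lb ex_ub X -> Precedence ex_vals X ->
  Posz 2 \notin nth [::] X 1.
Proof.
case: X => [|x1 [|x2 [|? ?]]] [//= _ inX] prec; apply/negP => x2_2.
have [[lb_x1 _] [_ ub_x2]] := (inX 0 isT, inX 1 isT).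
have x1_1 : Posz 1 \in x1 by apply: lb_x1; rewrite !inE.
have x1_3 : Posz 3 \in x1 by apply: lb_x1; rewrite !inE.
have x2_1 : (Posz 1 \in x2) = false by apply/negP => /ub_x2; rewrite !inE.
have x2_3 : (Posz 3 \in x2) = false by apply/negP => /ub_x2; rewrite !inE.
case x1_2: (Posz 2 \in x1).
- (* 2 is found without 1 in S_2 before 1 is found without 2 *)
  have := prec 0 1 isT isT.
  by rewrite /Precedence2 /first_a /first_b /= x1_1 x1_2 x2_2 x2_1.
- (* 3 is found without 2 in S_1 before 2 is found without 3 *)
  have := prec 1 2 isT isT.
  by rewrite /Precedence2 /first_a /first_b /= x1_3 x1_2 x2_2 x2_3.
Qed.

Theorem theorem6 :
  (forall (vs : seq int) (lb ub : seq (seq int)),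
     uniq vs -> wf_bounds lb ub ->
     BC (Precedence vs) lb ub ->
     forall i j, i < j -> j < size vs ->
       BC (Precedence2 (nth (0 : int) vs i) (nth (0 : int) vs j)) lb ub)
  /\
  (exists (vs : seq int) (lb ub : seq (seq int)),
     [/\ uniq vs, wf_bounds lb ub,
         (forall i j, i < j -> j < size vs ->
            BC (Precedence2 (nth (0 : int) vs i) (nth (0 : int) vs j)) lb ub)
       & ~ BC (Precedence vs) lb ub]).
Proof.
split.
  move=> vs lb ub _ _ bc_vs i j lt_ij lt_j.
  by apply: BC_weaken bc_vs => X /(_ i j lt_ij lt_j).
exists ex_vals, ex_lb, ex_ub; split=> //.
- by apply/wf_bounds_of_within/within_boundsbP; vm_compute.
- exact: ex_pairwise_BC.
- move=> bc_global; have [supported _] := bc_global 1 isT.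
  have [X [[inX precX] X_2]] := supported (Posz 2) (mem_head _ _).
  by move: X_2; apply/negP/ex_no_support_2_in_S2.
Qed.
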